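(* Let $\pi$ be a permutation-invariant probability density on $\mathbb{X}^n$ and $q$ a probability density on $\mathbb{X}$. For every $x\in\mathbb{X}^n$, $A^{\mathrm{SOMA}}(x)\ge A^{\mathrm{RAN}}(x)$, where $$A^{\mathrm{SOMA}}(x)=\int_{\mathbb{X}}q(y)\sum_{i=1}^n\frac{w_i(y,x)}{W(y,x)}\alpha_i^{\mathrm{SOMA}}(y,x)\,dy,\qquad A^{\mathrm{RAN}}(x)=\int_{\mathbb{X}}q(y)\sum_{i=1}^n\frac1n\alpha_i^{\mathrm{IMwG}}(y,x)\,dy.$$
   Context: Permutation invariance: $\pi(x_{\sigma(1)},\dots,x_{\sigma(n)})=\pi(x)$ for all permutations $\sigma$. $[x_{-i},y]$ is $x$ with its $i$-th component replaced by $y$. Weights: $w_i(y,x)=\pi([x_{-i},y])/\big(q(y)\prod_{j\ne i}q(x_j)\big)$ ($1\le i\le n$), $w_0(y,x)=\pi(x)/\prod_j q(x_j)$, $W=\sum_{i=1}^n w_i$ (well-defined, positive). $\alpha_i^{\mathrm{SOMA}}(y,x)=\min\{1,W/(W+w_0-w_i)\}$, $\alpha_i^{\mathrm{IMwG}}(y,x)=\min\{1,w_i/w_0\}$. $A^{\mathrm{SOMA}}(x)$ and $A^{\mathrm{RAN}}(x)$ are the probabilities of accepting a move from $x$ under the SOMA sampler and the random-scan independent-Metropolis-within-Gibbs sampler, respectively. *)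

From HB Require Import structures.
From mathcomp Require Import all_boot all_order all_algebra all_fingroup.
From mathcomp Require Import all_classical all_reals all_analysis.
Set Implicit Arguments. Unset Strict Implicit. Unset Printing Implicit Defensive.
Import Order.TTheory GRing.Theory Num.Theory.
Local Open Scope ring_scope.

Section SOMA.
Context {d : measure_display} {T : measurableType d} {R : realType} {n : nat}.

Definition upd (x : 'I_n -> T) (i : 'I_n) (y : T) : 'I_n -> T :=
  fun j => if j == i then y else x j.

Definition perm_invariant (pi : ('I_n -> T) -> R) : Prop :=
  forall (s : 'S_n) (x : 'I_n -> T), pi (fun j => x (s j)) = pi x.

Variables (pi : ('I_n -> T) -> R) (q : T -> R).

Definition wi (i : 'I_n) (y : T) (x : 'I_n -> T) : R :=
  pi (upd x i y) / (q y * \prod_(j < n | j != i) q (x j)).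

Definition w0 (x : 'I_n -> T) : R := pi x / \prod_(j < n) q (x j).

Definition Wsum (y : T) (x : 'I_n -> T) : R := \sum_(i < n) wi i y x.

Definition alpha_SOMA (i : 'I_n) (y : T) (x : 'I_n -> T) : R :=
  Num.min 1 (Wsum y x / (Wsum y x + w0 x - wi i y x)).

Definition alpha_IMwG (i : 'I_n) (y : T) (x : 'I_n -> T) : R :=
  Num.min 1 (wi i y x / w0 x).

Variable (mu : {measure set T -> \bar R}).

Definition A_SOMA (x : 'I_n -> T) : \bar R :=
  (\int[mu]_y (q y * \sum_(i < n) (wi i y x / Wsum y x) * alpha_SOMA i y x)%:E)%E.

Definition A_RAN (x : 'I_n -> T) : \bar R :=
  (\int[mu]_y (q y * \sum_(i < n) n%:R^-1 * alpha_IMwG i y x)%:E)%E.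

End SOMA.

(* The inequality holds pointwise in the proposal y.  Write W = sum_i w_i and
   S = sum_i min(w0, w_i), so that the random-scan integrand is S / (n w0).
   Each SOMA term equals w_i / max(W, W + w0 - w_i), hence is at least w_i / E
   with E = W + n w0 - S, and summing gives W / E >= S / (n w0), which is
   (n w0 - S)(W - S) >= 0. *)
From HB Require Import structures.
From mathcomp Require Import all_boot all_order all_algebra all_fingroup.
From mathcomp Require Import all_classical all_reals all_analysis.
From mathcomp Require Import lra.
Import Order.TTheory GRing.Theory Num.Theory.

Set Implicit Arguments.
Unset Strict Implicit.
Unset Printing Implicit Defensive.

Local Open Scope ring_scope.

Section weight_inequality.
Variable R : realFieldType.

Lemma min1_divr (a c : R) : 0 < c -> Num.min 1 (a / c) = Num.min c a / c.
Proof.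
move=> c_gt0; have [ca|ac] := leP c a.
  by rewrite min_l ?divff ?gt_eqF // ler_pdivlMr // mul1r.
by rewrite min_r // ler_pdivrMr // mul1r ltW.
Qed.

Lemma divr_min1_div (a W D : R) : 0 < W -> 0 < D ->
  a / W * Num.min 1 (W / D) = a / Num.max W D.
Proof.
move=> W_gt0 D_gt0; have [WD|DW] := leP W D.
  by rewrite min_r ?mulrA ?divfK ?gt_eqF // ler_pdivrMr // mul1r.
by rewrite min_l ?mulr1 // ler_pdivlMr // mul1r ltW.
Qed.

Lemma ler_div_overlap (S W M : R) : 0 <= S -> S <= W -> S <= M -> 0 < M ->
  S / M <= W / (W + M - S).
Proof.
move=> S_ge0 SW SM M_gt0.
have E_gt0 : 0 < W + M - S by lra.
rewrite ler_pdivrMr // mulrAC ler_pdivlMr //.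
have : 0 <= (M - S) * (W - S) by apply: mulr_ge0; lra.
nra.
Qed.

Lemma mean_min_ratio_le_soma (I : finType) (w : I -> R) (w0 : R) :
  0 < w0 -> (forall i, 0 <= w i) -> 0 < \sum_i w i ->
  \sum_i #|I|%:R^-1 * Num.min 1 (w i / w0) <=
  \sum_i (w i / \sum_j w j) *
         Num.min 1 ((\sum_j w j) / ((\sum_j w j) + w0 - w i)).
Proof.
move=> w0_gt0 w_ge0 W_gt0; set W := \sum_j w j.
set S := \sum_i Num.min w0 (w i); set M := #|I|%:R * w0.
have I_gt0 : (0 < #|I|)%N.
  rewrite lt0n; apply: contraTneq W_gt0 => /card0_eq I0.
  by rewrite /W big_pred0 ?ltxx.
have M_gt0 : 0 < M by rewrite mulr_gt0 // ltr0n.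
have S_ge0 : 0 <= S by apply: sumr_ge0 => i _; rewrite le_min (ltW w0_gt0) w_ge0.
have S_le_W : S <= W by apply: ler_sum => i _; rewrite ge_min lexx orbT.
have S_le_M : S <= M.
  by rewrite /M mulr_natl -sumr_const; apply: ler_sum => i _; rewrite ge_min lexx.
have w_le_W i : w i <= W by rewrite /W (bigD1 i) //= lerDl sumr_ge0.
have deficit_ge i : w0 - w i <= M - S.
  have -> : M - S = \sum_j (w0 - Num.min w0 (w j)).
    by rewrite /M sumrB sumr_const mulr_natl.
  rewrite (bigD1 i) //= -[w0 - w i]addr0 lerD ?sumr_ge0 //.
    by rewrite lerD2l lerN2 ge_min lexx orbT.
  by move=> j _; rewrite subr_ge0 ge_min lexx.
have -> : \sum_i #|I|%:R^-1 * Num.min 1 (w i / w0) = S / M.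
  rewrite /S /M invfM mulrCA mulr_suml mulr_sumr.
  by apply: eq_bigr => i _; rewrite min1_divr.
apply: (le_trans (ler_div_overlap S_ge0 S_le_W S_le_M M_gt0)).
rewrite mulr_suml; apply: ler_sum => i _.
have D_gt0 : 0 < W + w0 - w i by have := w_le_W i; lra.
rewrite divr_min1_div // ler_wpM2l // lef_pV2 ?posrE ?lt_max ?W_gt0 //; last lra.
by rewrite ge_max; apply/andP; split; have := deficit_ge i; lra.
Qed.

End weight_inequality.

Lemma ge0_le_integralT d (T : measurableType d) (R : realType)
    (mu : {measure set T -> \bar R}) (f g : T -> \bar R) :
  (forall y, 0 <= f y)%E -> (forall y, f y <= g y)%E ->
  (\int[mu]_y f y <= \int[mu]_y g y)%E.
Proof.
move=> f_ge0 fg; have g_ge0 y : (0 <= g y)%E := le_trans (f_ge0 y) (fg y).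
rewrite !ge0_integralTE //.
apply: ge_ereal_sup => _ [h /= hf <-]; apply: ereal_sup_ubound => /=.
by exists h => // y; apply: le_trans (hf y) (fg y).
Qed.

Theorem theorem4 (d : measure_display) (T : measurableType d) (R : realType)
  (mu : {measure set T -> \bar R}) (n : nat)
  (pi : ('I_n -> T) -> R) (q : T -> R)
  (* pi : nonnegative, permutation invariant, measurable in each coordinate *)
  (pi_ge0 : forall x, 0 <= pi x)
  (pi_perm : perm_invariant pi)
  (pi_meas : forall (x : 'I_n -> T) (i : 'I_n),
      measurable_fun setT (fun y => pi (upd x i y)))
  (* q : probability density on T w.r.t. mu *)
  (q_ge0 : forall y, 0 <= q y)
  (q_meas : measurable_fun setT q)
  (q_int1 : (\int[mu]_y (q y)%:E = 1)%E)
  (x : 'I_n -> T)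
  (* the weights are well-defined and positive at x *)
  (qx_gt0 : forall j, 0 < q (x j))
  (w0_gt0 : 0 < w0 pi q x)
  (W_gt0 : forall y, 0 < q y -> 0 < Wsum pi q y x) :
  (A_RAN pi q mu x <= A_SOMA pi q mu x)%E.
Proof.
have wi_ge0 i y : 0 <= wi pi q i y x.
  by rewrite divr_ge0 // mulr_ge0 // prodr_ge0.
apply: ge0_le_integralT => y; rewrite lee_fin.
  apply: mulr_ge0 => //; apply: sumr_ge0 => i _; rewrite /alpha_IMwG.
  by rewrite mulr_ge0 ?invr_ge0 // le_min ler01 divr_ge0 ?wi_ge0 ?(ltW w0_gt0).
have [<-|qy_neq0] := eqVneq 0 (q y); first by rewrite !mul0r.
have qy_gt0 : 0 < q y by rewrite lt_neqAle qy_neq0 q_ge0.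
rewrite ler_wpM2l // -[n in n%:R^-1]card_ord /alpha_IMwG /alpha_SOMA /Wsum.
exact: (mean_min_ratio_le_soma w0_gt0 (wi_ge0^~ y) (W_gt0 y qy_gt0)).
Qed.
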